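(* Let $G$ be a graph, and let $u$ and $v$ be non-adjacent vertices of $G$ with $d_G(u)\geq 1$. Then $$C_u(G+uv)-C_u(G)\leq \frac{2}{d_G(u)+1},$$ with equality if and only if $N_G(u)\subseteq N_G(v)$ and $N_G(u)$ is an independent set in $G$.
   Context: All graphs are finite and simple; $G+uv$ denotes the graph obtained from $G$ by adding the edge $uv$. For a vertex $w$ of a graph $G$, $N_G(w)$ is its neighborhood, $d_G(w)$ its degree, and $m(G[N_G(w)])$ the number of edges of the subgraph induced by $N_G(w)$. The clustering coefficient of $w$ in $G$ is $C_w(G)=m(G[N_G(w)])/\binom{d_G(w)}{2}$ if $d_G(w)\geq 2$, and $C_w(G)=0$ otherwise. *)

From HB Require Import structures.
From mathcomp Require Import all_boot all_order all_algebra.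
Set Implicit Arguments. Unset Strict Implicit. Unset Printing Implicit Defensive.
Import Order.TTheory GRing.Theory Num.Theory.

Definition simple_graph (T : finType) (e : rel T) : Prop :=
  symmetric e /\ irreflexive e.

Definition add_edge (T : finType) (e : rel T) (u v : T) : rel T :=
  fun x y => [|| e x y, (x == u) && (y == v) | (x == v) && (y == u)].

Definition nbhd (T : finType) (e : rel T) (w : T) : {set T} := [set x | e w x].

Definition deg (T : finType) (e : rel T) (w : T) : nat := #|nbhd e w|.

Definition induced_edges (T : finType) (e : rel T) (S : {set T}) : nat :=
  #|[set E : {set T} | (E \subset S) &&
       [exists x, exists y, e x y && (E == [set x; y])]]|.

Definition clustering (T : finType) (e : rel T) (w : T) : rat :=
  if (2 <= deg e w)%N
  then ((induced_edges e (nbhd e w))%:R / ('C(deg e w, 2))%:R)%R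
  else 0%R.

Definition independent (T : finType) (e : rel T) (S : {set T}) : Prop :=
  forall x y, x \in S -> y \in S -> ~~ e x y.

From HB Require Import structures.
From mathcomp Require Import all_boot all_order all_algebra.
From mathcomp Require Import ring lra.
Set Implicit Arguments. Unset Strict Implicit. Unset Printing Implicit Defensive.
Import Order.TTheory GRing.Theory Num.Theory.

(* Adding [uv] adds [v] to [N(u)] and, inside it, one edge [vx] for each
   common neighbour [x] of [u] and [v].  So with [d = d_G(u)], [m] the number
   of edges in [N(u)] and [k = |N(u) :&: N(v)| <= d], the coefficient goes
   from [m / C(d,2)] to [(m + k) / C(d+1,2)].  For [d >= 2] its distance to
   [2/(d+1)] is [2((d-k)(d-1) + 2m) / (d(d+1)(d-1))], a sum of two nonnegative
   terms vanishing iff [k = d] and [m = 0]; the case [d = 1] forces [m = 0]. *)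

Section InducedEdges.
Variable T : finType.
Implicit Types (e : rel T) (S : {set T}).

Definition edges_within e S : {set {set T}} :=
  [set E : {set T} | (E \subset S) &&
     [exists x, exists y, e x y && (E == [set x; y])]].

Lemma induced_edgesE e S : induced_edges e S = #|edges_within e S|.
Proof. by []. Qed.

Lemma edges_withinP e S E :
  reflect (exists x y, [/\ e x y, x \in S, y \in S & E = [set x; y]])
          (E \in edges_within e S).
Proof.
rewrite inE; apply: (iffP andP).
  case=> /subsetP sES /existsP[x /existsP[y /andP[exy /eqP defE]]].
  by exists x, y; split=> //; apply: sES; rewrite defE !inE eqxx ?orbT.
case=> x [y [exy xS yS ->]]; split.
  by apply/subsetP=> z; rewrite !inE => /orP[]/eqP->.
by apply/existsP; exists x; apply/existsP; exists y; rewrite exy eqxx.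
Qed.

Lemma eq_induced_edges e e' S :
  {in S &, e =2 e'} -> induced_edges e S = induced_edges e' S.
Proof.
move=> ee'; rewrite !induced_edgesE; apply: eq_card => E.
by apply/edges_withinP/edges_withinP=> -[x [y [exy xS yS ->]]];
  exists x, y; split; rewrite // ?ee' // -ee'.
Qed.

Lemma induced_edges_eq0 e S : induced_edges e S = 0%N <-> independent e S.
Proof.
rewrite induced_edgesE; split.
  move=> /eqP; rewrite cards_eq0 => /eqP noE x y xS yS; apply/negP=> exy.
  have : [set x; y] \in edges_within e S by apply/edges_withinP; exists x, y.
  by rewrite noE inE.
move=> indS; apply/eqP; rewrite cards_eq0; apply/eqP/setP=> E; rewrite in_set0.
apply/negbTE/edges_withinP=> -[x [y [exy xS yS _]]].
by move: (indS x y xS yS); rewrite exy.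
Qed.

Lemma induced_edges_le_bin2 e S :
  irreflexive e -> (induced_edges e S <= 'C(#|S|, 2))%N.
Proof.
move=> irr; rewrite induced_edgesE -cards_draws; apply: subset_leq_card.
apply/subsetP=> _ /edges_withinP[x [y [exy xS yS ->]]].
have xy : x != y by apply: contraTneq exy => ->; rewrite irr.
rewrite inE cards2 xy andbT.
by apply/subsetP=> z; rewrite !inE => /orP[]/eqP->.
Qed.

Lemma induced_edges_setU1 e S v : simple_graph e -> v \notin S ->
  induced_edges e (v |: S) = (induced_edges e S + #|S :&: nbhd e v|)%N.
Proof.
move=> [sym irr] vNS.
have inj_v : {in S :&: nbhd e v &, injective (fun x => [set v; x])}.
  move=> x y /setIP[xS _] _ /= eq_vxy.
  have : x \in [set v; y] by rewrite -eq_vxy !inE eqxx orbT.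
  by rewrite !inE => /orP[/eqP xv | /eqP //]; rewrite -xv xS in vNS.
rewrite !induced_edgesE -(card_in_imset inj_v) -cardsUI.
have -> : edges_within e S :&: [set [set v; x] | x in S :&: nbhd e v] = set0.
  apply/setP=> E; rewrite in_set0 in_setI; apply/negP.
  case/andP=> /edges_withinP[x [y [_ xS yS ->]]].
  case/imsetP=> z _ eq_xy_vz; have : v \in [set x; y] by rewrite eq_xy_vz !inE eqxx.
  by rewrite !inE => /orP[]/eqP vE; rewrite vE ?xS ?yS in vNS.
rewrite cards0 addn0; apply: eq_card => E; rewrite in_setU.
apply/edges_withinP/idP.
  case=> x [y [+ + + ->]]; rewrite !in_setU1.
  have [-> | _] := eqVneq x v; have [-> | _] := eqVneq y v => /=.
  - by rewrite irr.
  - move=> evy _ yS; apply/orP; right; apply/imsetP; exists y => //.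
    by rewrite in_setI yS inE.
  - move=> exv xS _; apply/orP; right; apply/imsetP; exists x; last by rewrite setUC.
    by rewrite in_setI xS inE sym.
  - by move=> exy xS yS; apply/orP; left; apply/edges_withinP; exists x, y.
case/orP=> [/edges_withinP[x [y [exy xS yS ->]]] | /imsetP[x /setIP[xS]]].
  by exists x, y; split; rewrite // in_setU1 ?xS ?yS orbT.
by rewrite inE => evx ->; exists v, x; split; rewrite // in_setU1 ?eqxx ?xS ?orbT.
Qed.

End InducedEdges.

Section AddEdge.
Variables (T : finType) (e : rel T) (u v : T).
Hypothesis neq_uv : u != v.

Lemma nbhd_add_edge : nbhd (add_edge e u v) u = v |: nbhd e u.
Proof.
apply/setP=> x; rewrite !inE /add_edge eqxx (negbTE neq_uv) /=.
by rewrite orbF orbC.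
Qed.

Lemma deg_add_edge : ~~ e u v -> deg (add_edge e u v) u = (deg e u).+1.
Proof. by move=> nuv; rewrite /deg nbhd_add_edge cardsU1 inE nuv. Qed.

Lemma induced_edges_add_edge (S : {set T}) : u \notin S ->
  induced_edges (add_edge e u v) S = induced_edges e S.
Proof.
move=> uNS; apply: eq_induced_edges => x y xS yS.
have [xu yu] : x != u /\ y != u by split; apply: contraNneq uNS => <-.
by rewrite /add_edge (negbTE xu) (negbTE yu) andbF !orbF.
Qed.

End AddEdge.

(* Both sides vanish when [deg e w < 2], as ['C(deg e w, 2) = 0] and [x / 0 = 0]. *)
Lemma clusteringE (T : finType) (e : rel T) (w : T) :
  clustering e w = ((induced_edges e (nbhd e w))%:R / 'C(deg e w, 2)%:R)%R.
Proof.
rewrite /clustering; case: leqP => // deg_lt2.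
by rewrite bin_small // invr0 mulr0.
Qed.

Lemma bin2_double n : ('C(n, 2) * 2 = n * n.-1)%N.
Proof.
rewrite bin2 muln2 halfK; case: n => //= n.
by rewrite oddM /= andNb subn0.
Qed.

Local Open Scope ring_scope.

Lemma natr_bin2 (R : numFieldType) n : 'C(n, 2)%:R = n%:R * (n%:R - 1) / 2 :> R.
Proof.
apply: (canRL (mulfK _)); first by rewrite pnatr_eq0.
rewrite -natrM bin2_double natrM; case: n => [|n]; first by rewrite !mul0r.
by rewrite -natr1 addrK.
Qed.

Lemma clustering_gain_defect (d m k : nat) : (2 <= d)%N ->
  2 / (d + 1)%:R - ((m + k)%:R / 'C(d.+1, 2)%:R - m%:R / 'C(d, 2)%:R)
  = ((d%:R - k%:R) * (d%:R - 1) + 2 * m%:R) * 2 / (d%:R * (d%:R + 1) * (d%:R - 1))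
    :> rat.
Proof.
move=> d_ge2; have D_ge2 : 2 <= d%:R :> rat by rewrite ler_nat.
have D_neq0 : d%:R != 0 :> rat by apply/eqP; lra.
have D1_neq0 : d%:R + 1 != 0 :> rat by apply/eqP; lra.
have D1'_neq0 : d%:R - 1 != 0 :> rat by apply/eqP; lra.
rewrite !natr_bin2 !natrD -natr1; field.
by rewrite D_neq0 D1_neq0 D1'_neq0.
Qed.

Lemma clustering_gain_le (d m k : nat) :
  (1 <= d)%N -> (k <= d)%N -> (m <= 'C(d, 2))%N ->
  (m + k)%:R / 'C(d.+1, 2)%:R - m%:R / 'C(d, 2)%:R <= 2 / (d + 1)%:R :> rat
  /\ ((m + k)%:R / 'C(d.+1, 2)%:R - m%:R / 'C(d, 2)%:R = 2 / (d + 1)%:R :> rat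
      <-> k = d /\ m = 0%N).
Proof.
rewrite leq_eqVlt => /predU1P[<- | d_ge2] k_le_d m_le.
  move: m_le; rewrite bin_small // leqn0 => /eqP->.
  rewrite add0n binn divr1 mul0r subr0 divff ?pnatr_eq0 // lern1 k_le_d.
  by split=> //; split=> [/eqP | [->]] //; rewrite pnatr_eq1 => /eqP.
have D_gt1 : 1 < d%:R :> rat by rewrite ltr1n.
have K_le_D : k%:R <= d%:R :> rat by rewrite ler_nat.
have M_ge0 : 0 <= m%:R :> rat by [].
have gap_eq0 (x y : rat) : x = y <-> y - x = 0.
  by split=> [-> | /subr0_eq ->]; rewrite ?subrr.
rewrite -subr_ge0 gap_eq0 clustering_gain_defect //.
have denom_gt0 : 0 < d%:R * (d%:R + 1) * (d%:R - 1) :> rat.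
  by rewrite !mulr_gt0 //; lra.
have lin_ge0 : 0 <= (d%:R - k%:R) * (d%:R - 1) :> rat by rewrite mulr_ge0 //; lra.
split; first by rewrite divr_ge0 ?(ltW denom_gt0) // mulr_ge0 //; lra.
split=> [/eqP | [-> ->]]; last by rewrite subrr mul0r mulr0 add0r !mul0r.
rewrite mulf_eq0 invr_eq0 (gt_eqF denom_gt0) orbF mulf_eq0 pnatr_eq0 orbF.
move=> /eqP num_eq0; have /eqP : (d%:R - k%:R) * (d%:R - 1) = 0 :> rat by lra.
rewrite mulf_eq0 subr_eq0 eqr_nat (_ : d%:R - 1 == 0 = false); last by apply/eqP; lra.
rewrite orbF eq_sym => /eqP ->; split=> //; apply/eqP; rewrite -(eqr_nat rat); lra.
Qed.

Theorem mainTheorem5 (T : finType) (e : rel T) (u v : T) :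
  simple_graph e -> u != v -> ~~ e u v -> (1 <= deg e u)%N ->
  clustering (add_edge e u v) u - clustering e u <= 2 / (deg e u + 1)%:R
  /\ (clustering (add_edge e u v) u - clustering e u = 2 / (deg e u + 1)%:R
      <-> (nbhd e u \subset nbhd e v) /\ independent e (nbhd e u)).
Proof.
move=> sg neq_uv nuv deg_ge1; have irr := sg.2.
have uNnbhd : u \notin v |: nbhd e u by rewrite in_setU1 inE (negbTE neq_uv) irr.
have vNnbhd : v \notin nbhd e u by rewrite inE.
have common_le := subset_leq_card (subsetIl (nbhd e u) (nbhd e v)).
have := clustering_gain_le deg_ge1 common_le (induced_edges_le_bin2 (nbhd e u) irr).
rewrite !clusteringE deg_add_edge // nbhd_add_edge // induced_edges_add_edge //.
rewrite induced_edges_setU1 // => -[-> gain_eq]; split=> //.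
have common_eq : (#|nbhd e u :&: nbhd e v| == deg e u) = (nbhd e u \subset nbhd e v).
  by rewrite (subset_leqif_card (subsetIl _ _)).2 subsetI subxx.
rewrite gain_eq -common_eq -induced_edges_eq0.
by split=> -[/eqP ? ?]; split=> //; apply/eqP.
Qed.
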